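(* Let $k>24$ be an integer. Then for every finite point set $\mathcal{P}\subset\mathbb{R}^2$, the overlapping Yao graph $\mathsf{OY}_k(\mathcal{P})$ is a geometric $\tau_k$-spanner, where $$\tau_k=\left(1-2\sin\Big(\frac{\pi}{k}+\frac{\pi}{8}\Big)\right)^{-1}.$$
   Context: Polar angles are measured from the positive $x$-axis, modulo $2\pi$. $C_u(\gamma_1,\gamma_2)$ denotes the set of points $w\neq u$ such that the polar angle of $\overrightarrow{uw}$ lies in $[\gamma_1,\gamma_2)$. Overlapping Yao graph $\mathsf{OY}_k(\mathcal{P})$: let $\gamma=\lceil k/4\rceil\cdot 2\pi/k$; for each $u\in\mathcal{P}$ and each $j=0,\dots,k-1$, among the points $v\in\mathcal{P}\cap C_u(2j\pi/k,\,2j\pi/k+\gamma)$ (if any) select one with $|uv|$ smallest and add the edge $\overrightarrow{uv}$ (ties broken arbitrarily but consistently). A graph $G$ with vertex set $\mathcal{P}$ (edges regarded as undirected with Euclidean lengths) is a geometric $t$-spanner if for all $u,v\in\mathcal{P}$ the shortest $u$-$v$ path in $G$ has length at most $t|uv|$. *)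

From Stdlib Require Import Reals Lra List.
Open Scope R_scope.

Definition pt : Type := (R * R)%type.

Definition dist (p q : pt) : R :=
  sqrt ((fst p - fst q) ^ 2 + (snd p - snd q) ^ 2).

(* w belongs to C_u(g1,g2): w <> u and the polar angle of uw lies in [g1,g2)
   modulo 2*pi, i.e. uw = |uw| (cos th, sin th) for some th in [g1,g2). *)
Definition in_cone (u w : pt) (g1 g2 : R) : Prop :=
  w <> u /\
  exists th, g1 <= th < g2 /\
    fst w - fst u = dist u w * cos th /\
    snd w - snd u = dist u w * sin th.

(* gamma = ceil(k/4) * 2 pi / k *)
Definition oy_gamma (k : nat) : R :=
  INR ((k + 3) / 4)%nat * (2 * PI) / INR k.

Definition cone_start (k j : nat) : R := 2 * INR j * PI / INR k.

(* sel u j is a valid choice of the j-th edge of u in OY_k(P):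
   a nearest point of P in the cone C_u(2j pi/k, 2j pi/k + gamma), or None
   if that cone contains no point of P. *)
Definition is_OY_selection (k : nat) (P : list pt)
  (sel : pt -> nat -> option pt) : Prop :=
  forall u, In u P -> forall j, (j < k)%nat ->
    match sel u j with
    | None => forall v, In v P ->
        ~ in_cone u v (cone_start k j) (cone_start k j + oy_gamma k)
    | Some v => In v P /\
        in_cone u v (cone_start k j) (cone_start k j + oy_gamma k) /\
        (forall w, In w P ->
           in_cone u w (cone_start k j) (cone_start k j + oy_gamma k) ->
           dist u v <= dist u w)
    end.

Definition OY_arc (k : nat) (P : list pt) (sel : pt -> nat -> option pt)
  (u v : pt) : Prop :=
  In u P /\ exists j, (j < k)%nat /\ sel u j = Some v.

Fixpoint walk_ok (E : pt -> pt -> Prop) (a : pt) (l : list pt) : Prop :=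
  match l with
  | nil => True
  | b :: l' => (E a b \/ E b a) /\ walk_ok E b l'
  end.

Fixpoint walk_len (a : pt) (l : list pt) : R :=
  match l with
  | nil => 0
  | b :: l' => dist a b + walk_len b l'
  end.

(* geometric t-spanner: for all u v in P, the shortest u-v path has length
   <= t |uv| (equivalently some u-v path has length <= t |uv|). *)
Definition is_spanner (P : list pt) (E : pt -> pt -> Prop) (t : R) : Prop :=
  forall u v, In u P -> In v P ->
    exists l, walk_ok E u l /\ last l u = v /\ walk_len u l <= t * dist u v.

Definition tau (k : nat) : R := / (1 - 2 * sin (PI / INR k + PI / 8)).

(* Route greedily: from u, follow the edge of the cone whose angular window best
   matches the direction of the target v.  That cone contains v, and since
   gamma >= pi/2 its windows overlap enough that the chosen cone can be taken
   with v's direction within pi/4 + 2 pi/k of every other direction in it.  The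
   nearest point w of the cone then satisfies, by the law of cosines,
   |wv| <= |uv| - (1 - 2 sin(pi/k + pi/8)) |uw|, so each step pays for its own
   length out of the decrease of the remaining distance, and summing gives the
   stretch factor tau_k.  The walk terminates because |wv| < |uv| and P is
   finite. *)

From Pilot Require Import Defs.
From Stdlib Require Import Reals List Lra Lia.
Import Defs. (* so that [dist] is Defs.dist, not the metric-space [dist] of Reals *)
Open Scope R_scope.

Lemma dist_nonneg u v : 0 <= dist u v.
Proof. apply sqrt_pos. Qed.

Lemma dist_sq u v : dist u v ^ 2 = (fst u - fst v) ^ 2 + (snd u - snd v) ^ 2.
Proof.
  unfold dist. rewrite pow2_sqrt; [reflexivity|].
  apply Rplus_le_le_0_compat; apply pow2_ge_0.
Qed.

Lemma dist_eq0 u v : dist u v = 0 -> v = u.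
Proof.
  intros H. pose proof (dist_sq u v) as E. rewrite H in E.
  destruct u as [x1 y1], v as [x2 y2]; simpl in *.
  pose proof (pow2_ge_0 (x1 - x2)). pose proof (pow2_ge_0 (y1 - y2)).
  assert (Ex : x1 - x2 = 0) by (apply Rsqr_0_uniq; unfold Rsqr; nra).
  assert (Ey : y1 - y2 = 0) by (apply Rsqr_0_uniq; unfold Rsqr; nra).
  f_equal; lra.
Qed.

Lemma dist_pos u v : v <> u -> 0 < dist u v.
Proof.
  intros Hne. destruct (dist_nonneg u v) as [H|H]; [exact H|].
  exfalso. exact (Hne (dist_eq0 u v (eq_sym H))).
Qed.

Lemma pt_eq_dec (a b : pt) : {a = b} + {a <> b}.
Proof.
  destruct a as [a1 a2], b as [b1 b2].
  destruct (Req_dec_T a1 b1), (Req_dec_T a2 b2); [left|right..]; congruence.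
Qed.

Lemma polar_angle_0_2PI (u v : pt) : v <> u ->
  exists t, 0 <= t < 2 * PI /\
    fst v - fst u = dist u v * cos t /\ snd v - snd u = dist u v * sin t.
Proof.
  intros Hne.
  set (x := fst v - fst u). set (y := snd v - snd u). set (r := dist u v).
  assert (Hr2 : r ^ 2 = x ^ 2 + y ^ 2) by (unfold r, x, y; rewrite dist_sq; ring).
  assert (Hr : 0 < r) by exact (dist_pos u v Hne).
  set (c := x / r).
  assert (Hcx : r * c = x) by (unfold c; field; lra).
  assert (Hc : -1 <= c <= 1).
  { assert (r ^ 2 * c ^ 2 <= r ^ 2 * 1) by (replace (r ^ 2 * c ^ 2) with ((r * c) ^ 2) by ring; nra).
    assert (c ^ 2 <= 1) by (apply Rmult_le_reg_l with (r ^ 2); nra).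
    nra. }
  assert (Hs : r * sin (acos c) = Rabs y).
  { rewrite sin_acos by exact Hc.
    assert (Hq : sqrt (1 - c²) * sqrt (1 - c²) = 1 - c * c)
      by (rewrite sqrt_sqrt; unfold Rsqr; nra).
    set (q := sqrt (1 - c²)) in *.
    assert (0 <= q) by apply sqrt_pos.
    apply Rsqr_inj; [apply Rmult_le_pos; lra | apply Rabs_pos |].
    unfold Rsqr. rewrite <- Rabs_mult, Rabs_right by nra.
    replace (r * q * (r * q)) with (r ^ 2 - (r * c) ^ 2) by (rewrite <- (Rmult_1_r (r ^ 2)) at 1; nra).
    rewrite Hcx, Hr2. ring. }
  pose proof (acos_bound c). pose proof PI_RGT_0.
  destruct (Rle_dec 0 y) as [Hy|Hy].
  - rewrite Rabs_right in Hs by lra.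
    exists (acos c). rewrite cos_acos by exact Hc. repeat split; lra.
  - rewrite Rabs_left in Hs by lra.
    assert (acos c <> 0) by (intros E; rewrite E, sin_0 in Hs; lra).
    exists (2 * PI - acos c).
    rewrite cos_minus, sin_minus, cos_2PI, sin_2PI, cos_acos by exact Hc.
    repeat split; lra.
Qed.

Lemma polar_angle_from (u v : pt) (L : R) : v <> u -> 0 <= L <= 2 * PI ->
  exists th, L <= th < L + 2 * PI /\
    fst v - fst u = dist u v * cos th /\ snd v - snd u = dist u v * sin th.
Proof.
  intros Hne HL.
  destruct (polar_angle_0_2PI u v Hne) as [t [Ht [Hx Hy]]].
  destruct (Rle_dec L t).
  - exists t. repeat split; lra.
  - exists (t + 2 * INR 1 * PI). rewrite cos_period, sin_period. simpl INR.
    repeat split; lra.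
Qed.

Lemma floor_lt_nat (n : nat) (x : R) : 0 <= x < INR n ->
  exists j, (j < n)%nat /\ INR j <= x < INR j + 1.
Proof.
  induction n as [|n IH]; intros Hx; [simpl in Hx; lra|].
  rewrite S_INR in Hx. destruct (Rlt_dec x (INR n)).
  - destruct (IH ltac:(lra)) as [j [Hj Hj2]]. exists j. split; [lia|lra].
  - exists n. split; [lia|lra].
Qed.

Lemma cos_le_cos_of_Rabs_le d e : Rabs d <= e -> e <= PI -> cos e <= cos d.
Proof.
  intros H1 H2.
  assert (Hmono : forall x, 0 <= x <= e -> cos e <= cos x).
  { intros x Hx. destruct (Req_dec x e) as [->|]; [lra|].
    left. apply cos_decreasing_1; lra. }
  destruct (Rle_dec 0 d).
  - rewrite Rabs_right in H1 by lra. apply Hmono; lra.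
  - rewrite Rabs_left in H1 by lra. rewrite <- (cos_neg d). apply Hmono; lra.
Qed.

(* With a = |uw| <= b = |uv| and angle wuv at most 2 beta, s = 2 sin beta:
   the law of cosines gives |wv|^2 = a^2 + b^2 - 2ab cos(wuv). *)
Lemma sqrt_law_of_cosines_le (a b c s : R) : 0 <= a <= b -> 0 <= s <= 2 ->
  1 - s ^ 2 / 2 <= c -> sqrt (a ^ 2 + b ^ 2 - 2 * a * b * c) <= b - (1 - s) * a.
Proof.
  intros Hab Hs Hc.
  assert (H0 : 0 <= b - (1 - s) * a) by nra.
  rewrite <- (sqrt_pow2 (b - (1 - s) * a)) by exact H0.
  apply sqrt_le_1_alt.
  assert (0 <= s * a * (b - a) * (2 - s)).
  { apply Rmult_le_pos; [apply Rmult_le_pos; [apply Rmult_le_pos|]|]; lra. }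
  assert (0 <= a * b * (c - (1 - s ^ 2 / 2))) by (apply Rmult_le_pos; nra).
  nra.
Qed.

Lemma dist_le_of_close_directions (u v w : pt) (th thw beta : R) :
  fst v - fst u = dist u v * cos th -> snd v - snd u = dist u v * sin th ->
  fst w - fst u = dist u w * cos thw -> snd w - snd u = dist u w * sin thw ->
  dist u w <= dist u v -> 0 <= beta <= PI / 2 -> Rabs (thw - th) <= 2 * beta ->
  dist w v <= dist u v - (1 - 2 * sin beta) * dist u w.
Proof.
  intros Hx Hy Hxw Hyw Hab Hb Hang.
  assert (Hsb : 0 <= sin beta <= 1) by (split; [apply sin_ge_0|apply SIN_bound]; lra).
  assert (Hc : 1 - (2 * sin beta) ^ 2 / 2 <= cos (thw - th)).
  { replace (1 - (2 * sin beta) ^ 2 / 2) with (cos (2 * beta)) by (rewrite cos_2a_sin; field).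
    apply cos_le_cos_of_Rabs_le; lra. }
  pose proof (dist_nonneg u w).
  eapply Rle_trans;
    [|apply (sqrt_law_of_cosines_le _ _ (cos (thw - th)) (2 * sin beta)); [lra|lra|exact Hc]].
  right. unfold dist at 1. f_equal.
  replace (fst w - fst v) with ((fst w - fst u) - (fst v - fst u)) by ring.
  replace (snd w - snd v) with ((snd w - snd u) - (snd v - snd u)) by ring.
  rewrite Hx, Hy, Hxw, Hyw, cos_minus.
  pose proof (sin2_cos2 thw). pose proof (sin2_cos2 th). unfold Rsqr in *. nra.
Qed.

Lemma filter_length_le_impl {A} (l : list A) (p q : A -> bool) :
  (forall x, In x l -> p x = true -> q x = true) ->
  (length (filter p l) <= length (filter q l))%nat.
Proof.
  induction l as [|a l IH]; intros H; simpl; [lia|].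
  specialize (IH (fun x Hx => H x (or_intror Hx))).
  destruct (p a) eqn:E1.
  - rewrite (H a (or_introl eq_refl) E1). simpl. lia.
  - destruct (q a); simpl; lia.
Qed.

Lemma filter_length_lt_impl {A} (l : list A) (p q : A -> bool) y :
  (forall x, In x l -> p x = true -> q x = true) ->
  In y l -> p y = false -> q y = true ->
  (length (filter p l) < length (filter q l))%nat.
Proof.
  induction l as [|a l IH]; intros H Hy Hp Hq; [destruct Hy|].
  pose proof (filter_length_le_impl l p q (fun x Hx => H x (or_intror Hx))).
  simpl. destruct Hy as [<-|Hy].
  - rewrite Hp, Hq. simpl. lia.
  - specialize (IH (fun x Hx => H x (or_intror Hx)) Hy Hp Hq).
    destruct (p a) eqn:E1.
    + rewrite (H a (or_introl eq_refl) E1). simpl. lia.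
    + destruct (q a); simpl; lia.
Qed.

Lemma last_cons (a d : pt) (l : list pt) : last (a :: l) d = last l a.
Proof.
  revert a d. induction l as [|b l IH]; intros a d; [reflexivity|].
  change (last (b :: l) d = last (b :: l) a). rewrite !IH. reflexivity.
Qed.

Section GreedyRouting.

Variables (P : list pt) (E : pt -> pt -> Prop) (c : R).
Hypothesis c_pos : 0 < c.
Hypothesis greedy_step : forall u v, In u P -> In v P -> v <> u ->
  exists w, In w P /\ E u w /\ 0 < dist u w /\
    dist w v <= dist u v - c * dist u w.

Definition closer_count (v : pt) (d : R) : nat :=
  length (filter (fun x => if Rlt_dec (dist x v) d then true else false) P).

Lemma closer_count_lt (u v w : pt) : In w P -> dist w v < dist u v ->
  (closer_count v (dist w v) < closer_count v (dist u v))%nat.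
Proof.
  intros Hw Hd. apply (filter_length_lt_impl _ _ _ w); [|exact Hw|..].
  - intros x _. do 2 destruct Rlt_dec; easy || lra.
  - destruct Rlt_dec; [lra|reflexivity].
  - destruct Rlt_dec; [reflexivity|lra].
Qed.

Lemma greedy_routing_spanner : is_spanner P E (/ c).
Proof.
  assert (Ht : 0 < / c) by (apply Rinv_0_lt_compat; lra).
  assert (Main : forall n u v, In u P -> In v P -> (closer_count v (dist u v) <= n)%nat ->
    exists l, walk_ok E u l /\ last l u = v /\ walk_len u l <= / c * dist u v).
  { induction n as [|n IH]; intros u v Hu Hv Hn;
      (destruct (pt_eq_dec v u) as [->|Hne];
       [exists nil; simpl; pose proof (dist_nonneg u u); split; [exact I|split; [reflexivity|nra]]|]);
      destruct (greedy_step u v Hu Hv Hne) as [w [Hw [Huw [Ha Hd]]]];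
      assert (Hlt := closer_count_lt u v w Hw ltac:(nra)).
    - lia.
    - destruct (IH w v Hw Hv ltac:(lia)) as [l [Hl1 [Hl2 Hl3]]].
      exists (w :: l). rewrite last_cons.
      split; [simpl; tauto|split; [exact Hl2|simpl]].
      assert (/ c * dist w v <= / c * (dist u v - c * dist u w)) by (apply Rmult_le_compat_l; lra).
      replace (/ c * (dist u v - c * dist u w)) with (/ c * dist u v - dist u w) in * by (field; lra).
      lra. }
  intros u v Hu Hv. exact (Main _ u v Hu Hv (le_n _)).
Qed.

End GreedyRouting.

Section OverlappingYao.

Variable k : nat.
Hypothesis k_gt24 : (24 < k)%nat.

Let q := PI / INR k.
Let m := INR ((k + 3) / 4).

Lemma INR_k_ge25 : 25 <= INR k.
Proof. replace 25 with (INR 25) by (simpl; lra). apply le_INR. lia. Qed.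

Lemma q_facts : 0 < q /\ INR k * q = PI /\ q <= PI / 25.
Proof.
  pose proof INR_k_ge25. pose proof PI_RGT_0. unfold q. repeat split.
  - apply Rdiv_lt_0_compat; lra.
  - field; lra.
  - unfold Rdiv. apply Rmult_le_compat_l; [lra|]. apply Rinv_le_contravar; lra.
Qed.

Lemma ceil_quarter_bounds : INR k <= 4 * m <= INR k + 3.
Proof.
  pose proof (Nat.div_mod_eq (k + 3) 4). pose proof (Nat.mod_upper_bound (k + 3) 4 ltac:(lia)).
  unfold m. replace 4 with (INR 4) by (simpl; lra). replace 3 with (INR 3) by (simpl; lra).
  rewrite <- mult_INR, <- plus_INR. split; apply le_INR; lia.
Qed.

Lemma oy_gamma_bounds : PI / 2 <= oy_gamma k <= PI / 2 + 3 / 2 * q.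
Proof.
  destruct q_facts as [H1 [H2 H3]]. pose proof ceil_quarter_bounds. pose proof INR_k_ge25.
  replace (oy_gamma k) with (2 * m * q) by (unfold oy_gamma, m, q; field; lra).
  assert (INR k * q <= 4 * m * q <= (INR k + 3) * q) by (split; apply Rmult_le_compat_r; lra).
  lra.
Qed.

Lemma cone_start_eq j : cone_start k j = 2 * INR j * q.
Proof. unfold cone_start, q. pose proof INR_k_ge25. field. lra. Qed.

(* Windows start every 2 pi/k and have width gamma; offsetting th by
   L = gamma - pi/4 - 2 pi/k picks the window in which th sits at distance
   at least gamma - pi/4 - 2 pi/k from the start and pi/4 from the end. *)
Lemma centered_cone (u v : pt) : v <> u ->
  exists j th, (j < k)%nat /\
    cone_start k j <= th < cone_start k j + oy_gamma k /\
    fst v - fst u = dist u v * cos th /\ snd v - snd u = dist u v * sin th /\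
    forall thw, cone_start k j <= thw < cone_start k j + oy_gamma k ->
      Rabs (thw - th) <= 2 * (q + PI / 8).
Proof.
  intros Hne.
  destruct q_facts as [Q1 [Q2 Q3]]. pose proof oy_gamma_bounds. pose proof PI_RGT_0.
  set (L := oy_gamma k - PI / 4 - 2 * q).
  destruct (polar_angle_from u v L Hne ltac:(unfold L; lra)) as [th [Hth [Hx Hy]]].
  destruct (floor_lt_nat k ((th - L) / (2 * q))) as [j [Hj [F1 F2]]].
  { split; [apply Rmult_le_pos; [lra|left; apply Rinv_0_lt_compat; lra]|].
    apply Rmult_lt_reg_r with (2 * q); [lra|]. unfold Rdiv.
    rewrite Rmult_assoc, Rinv_l by lra. lra. }
  assert (Hwin : 2 * INR j * q <= th - L < 2 * INR j * q + 2 * q).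
  { replace (th - L) with ((th - L) / (2 * q) * (2 * q)) by (field; lra).
    split; [apply Rmult_le_compat_r with (r := 2 * q) in F1|
            apply Rmult_lt_compat_r with (r := 2 * q) in F2]; lra. }
  exists j, th. rewrite cone_start_eq. unfold L in *.
  split; [exact Hj|]. split; [lra|]. split; [exact Hx|]. split; [exact Hy|].
  intros thw Hthw. apply Rabs_le. lra.
Qed.

Lemma sin_yao_angle_bounds : 0 <= sin (q + PI / 8) < 1 / 2.
Proof.
  destruct q_facts as [H1 [H2 H3]]. pose proof PI_RGT_0. split.
  - apply sin_ge_0; lra.
  - rewrite <- sin_PI6. apply sin_increasing_1; lra.
Qed.

Lemma OY_greedy_step (P : list pt) (sel : pt -> nat -> option pt) :
  is_OY_selection k P sel -> forall u v, In u P -> In v P -> v <> u ->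
  exists w, In w P /\ OY_arc k P sel u w /\ 0 < dist u w /\
    dist w v <= dist u v - (1 - 2 * sin (q + PI / 8)) * dist u w.
Proof.
  intros Hsel u v Hu Hv Hne.
  destruct (centered_cone u v Hne) as [j [th [Hj [Hcone [Hx [Hy Hclose]]]]]].
  assert (Hvc : in_cone u v (cone_start k j) (cone_start k j + oy_gamma k))
    by (split; [exact Hne|exists th; auto]).
  specialize (Hsel u Hu j Hj).
  destruct (sel u j) as [w|] eqn:Hsw; [|exact (False_ind _ (Hsel v Hv Hvc))].
  destruct Hsel as [Hw [[Hwu [thw [Hthw [Hxw Hyw]]]] Hmin]].
  exists w. split; [exact Hw|]. split; [split; [exact Hu|exists j; auto]|].
  split; [exact (dist_pos u w Hwu)|].
  destruct q_facts as [Q1 [_ Q3]]. pose proof PI_RGT_0.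
  apply (dist_le_of_close_directions u v w th thw); auto; lra.
Qed.

End OverlappingYao.

Theorem lemma8 (k : nat) (P : list pt) (sel : pt -> nat -> option pt) :
  (24 < k)%nat ->
  is_OY_selection k P sel ->
  is_spanner P (OY_arc k P sel) (tau k).
Proof.
  intros Hk Hsel.
  pose proof (sin_yao_angle_bounds k Hk).
  apply greedy_routing_spanner; [lra|].
  exact (OY_greedy_step k Hk P sel Hsel).
Qed.
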